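(* Let $k$ be a field and $Q,q\in k^\times$. Let $\mathcal P_{Q,q}=\bigoplus_{d\ge0}\mathcal P^d_{Q,q}$ and $\mathcal{AP}_q=\bigoplus_{d\ge0}\mathcal{AP}^d_q$ with the monoidal structure described below. Then $\mathcal{AP}_q$ acts on $\mathcal P_{Q,q}$ from the right via the functor $*$ described below (with the structure morphisms $\lambda$ and $\rho$ being identities on objects), i.e. $(\mathcal P_{Q,q},\mathcal{AP}_q,* )$ is an action pair.
   Context: Hecke algebras: $\mathcal H^B_{Q,q}(d)$ is generated by $T_0,\dots,T_{d-1}$ with relations $(T_0+Q)(T_0-Q^{-1})=0$; $(T_i+q)(T_i-q^{-1})=0$ ($i>0$); $T_iT_{i+1}T_i=T_{i+1}T_iT_{i+1}$ ($i>0$); $T_0T_1T_0T_1=T_1T_0T_1T_0$; $T_iT_j=T_jT_i$ ($|i-j|>1$). Its subalgebra generated by $T_1,\dots,T_{d-1}$ is the type A Hecke algebra $\mathcal H^A_q(d)$. For $n=2s$ let $\mathbb I_n=\{-\tfrac{2s-1}{2},\dots,\tfrac{2s-1}{2}\}$ (half-integers) and for $n=2s+1$ let $\mathbb I_n=\{-s,\dots,s\}$; $V_n$ has basis $\{v_i:i\in\mathbb I_n\}$. $R_q(v_i\otimes v_j)=q^{-1}v_i\otimes v_j$ if $i=j$, $v_j\otimes v_i$ if $i<j$, $v_j\otimes v_i+(q^{-1}-q)v_i\otimes v_j$ if $i>j$; $K_Q(v_i)=Q^{-1}v_i$ if $i=0$, $v_{-i}$ if $i>0$, $v_{-i}+(Q^{-1}-Q)v_i$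 if $i<0$. $\mathcal H^B_{Q,q}(d)$ acts on $V_n^{\otimes d}$ from the right: $T_i$ ($i>0$) by $R_q$ on factors $i,i+1$, $T_0$ by $K_Q$ on the first factor. Categories: $\mathcal C^B_d$ (resp. $\mathcal C^A_d$) has objects $V_n$, $n\ge1$, and morphisms $\mathrm{Hom}_{\mathcal H^B_{Q,q}(d)}(V_n^{\otimes d},V_m^{\otimes d})$ (resp. $\mathrm{Hom}_{\mathcal H^A_q(d)}(V_n^{\otimes d},V_m^{\otimes d})$); $\mathcal P^d_{Q,q}$ (resp. $\mathcal{AP}^d_q$) is the category of $k$-linear functors from $\mathcal C^B_d$ (resp. $\mathcal C^A_d$) to finite-dimensional vector spaces. Monoidal structure on $\mathcal{AP}_q$: for $F\in\mathcal{AP}^d_q$, $G\in\mathcal{AP}^e_q$, $(F\otimes G)(V_n)=F(V_n)\otimes G(V_n)$, and on morphisms $F\otimes G$ is the composite $\mathrm{Hom}_{\mathcal H^A_q(d+e)}(V_n^{\otimes d+e},V_m^{\otimes d+e})\to\mathrm{Hom}_{\mathcal H^A_q(d)\otimes\mathcal H^A_q(e)}(V_n^{\otimes d}\otimes V_n^{\otimes e},V_m^{\otimes d}\otimes V_m^{\otimes e})\cong\mathrm{Hom}_{\mathcal H^A_q(d)}(V_n^{\otimes d},V_m^{\otimes d})\otimes\mathrm{Hom}_{\mathcal H^A_q(e)}(V_n^{\otimes e},V_m^{\otimes e})\to\mathrm{Hom}(F(V_n),F(V_m))\otimes\mathrm{Hom}(G(V_n),G(V_m))\to\mathrm{Hom}((F\otimes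 G)(V_n),(F\otimes G)(V_m))$; the unit is the degree-0 functor with value $k$. The action: for $G\in\mathcal P^e_{Q,q}$ and $F\in\mathcal{AP}^d_q$, $G*F\in\mathcal P^{e+d}_{Q,q}$ has $(G*F)(V_n)=G(V_n)\otimes F(V_n)$, and on morphisms the analogous composite through $\mathrm{Hom}_{\mathcal H^B_{Q,q}(e)\otimes\mathcal H^A_q(d)}$, using $\mathcal H^B_{Q,q}(e)\otimes\mathcal H^A_q(d)\subseteq\mathcal H^B_{Q,q}(e+d)$ (the second factor generated by $T_{e+1},\dots,T_{e+d-1}$); on natural transformations, $(f*g)_{V_n}=f_{V_n}\otimes g_{V_n}$. Action pair: for a category $\mathcal B$ and monoidal category $(\mathcal A,\otimes,1_{\mathcal A})$ with associator $a$ and left unitor $l$, a right action is a functor $*:\mathcal B\times\mathcal A\to\mathcal B$ with (1) $(f_1*g_1)(f_2*g_2)=(f_1f_2)*(g_1g_2)$ whenever defined; (2) a natural morphism $\lambda_{Y,X_1,X_2}:Y*(X_1\otimes X_2)\to(Y*X_1)*X_2$ with $(\lambda_{Y,X_1,X_2}*\mathrm{id}_{X_3})\circ\lambda_{Y,X_1\otimes X_2,X_3}=\lambda_{Y*X_1,X_2,X_3}\circ\lambda_{Y,X_1,X_2\otimes X_3}\circ(\mathrm{id}_Y*a_{X_1,X_2,X_3})$; (3) a natural isomorphism $\rho_Y:Y*1_{\mathcal A}\to Y$ with $(\rho_Y*\mathrm{id}_X)\circ\lambda_{Y,1,X}=\mathrm{id}_Y*l_X$. *)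

From HB Require Import structures.
From mathcomp Require Import all_boot all_algebra.
From Stdlib Require Import ClassicalEpsilon.
From Stdlib Require List.
Set Implicit Arguments.
Unset Strict Implicit.
Unset Printing Implicit Defensive.
Import GRing.Theory.
Local Open Scope ring_scope.

Section HeckeDefs.
Variable k : fieldType.

(* Linear maps between spaces with finite bases A, B, written as matrices
   with rows indexed by A (row-vector convention, as the Hecke algebras act
   from the right): f a b = coefficient of b in the image of a. *)
Definition mor (A B : finType) := A -> B -> k.

(* "first f, then g" *)
Definition comp (A B C : finType) (f : mor A B) (g : mor B C) : mor A C :=
  fun a c => \sum_(b : B) f a b * g b c.

Definition idm (A : finType) : mor A A := fun a b => (a == b)%:R.

Definition tensm (A B C D : finType) (f : mor A B) (g : mor C D) :
  mor (A * C)%type (B * D)%type := fun x y => f x.1 y.1 * g x.2 y.2.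

(* Basis of V_n: 'I_n, where j : 'I_n stands for the index j - (n-1)/2 of
   I_n.  Then: index j is 0 iff 2j+1 = n, positive iff 2j+1 > n,
   negative iff 2j+1 < n; the index -i corresponds to rev_ord; the order on
   indices is the order on 'I_n. *)

Variables Q q : k.

Definition Rq (n : nat) (i j i' j' : 'I_n) : k :=
    (i == j)%:R * q^-1 * ((i' == i) && (j' == j))%:R
  + (i != j)%:R * ((i' == j) && (j' == i))%:R
  + (j < i)%:R * (q^-1 - q) * ((i' == i) && (j' == j))%:R.

Definition KQ (n : nat) (i i' : 'I_n) : k :=
    ((2 * i).+1 == n)%:R * Q^-1 * (i' == i)%:R
  + (n < (2 * i).+1)%:R * (i' == rev_ord i)%:R
  + ((2 * i).+1 < n)%:R * ((i' == rev_ord i)%:R + (Q^-1 - Q) * (i' == i)%:R).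

(* basis of V_n^{(x) d}: tuples of basis indices *)
Definition tens (d n : nat) : finType := {ffun 'I_d -> 'I_n}.

Definition Tpair (d n : nat) (p p' : 'I_d) : mor (tens d n) (tens d n) :=
  fun x y => Rq (x p) (x p') (y p) (y p') *
             [forall j, ((j != p) && (j != p')) ==> (x j == y j)]%:R.

Definition Kfac (d n : nat) (p : 'I_d) : mor (tens d n) (tens d n) :=
  fun x y => KQ (x p) (y p) * [forall j, (j != p) ==> (x j == y j)]%:R.

(* Hom_{H^A_q(d)}(V_n^{(x)d}, V_m^{(x)d}): commuting with T_1,...,T_{d-1}
   (T_i acts on the factors i, i+1, i.e. 0-based positions i-1, i). *)
Definition HomA (d n m : nat) (f : mor (tens d n) (tens d m)) : Prop :=
  forall p p' : 'I_d, val p' = (val p).+1 ->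
    comp (@Tpair d n p p') f = comp f (@Tpair d m p p').

Definition HomB (d n m : nat) (f : mor (tens d n) (tens d m)) : Prop :=
  HomA f /\
  forall p : 'I_d, val p = 0 -> comp (@Kfac d n p) f = comp f (@Kfac d m p).

Definition HomPred := forall d n m : nat, mor (tens d n) (tens d m) -> Prop.

(* Raw data of a functor from C_d (objects V_n) to finite-dimensional
   vector spaces: each F(V_n) is given by a finite basis. *)
Record fdata (d : nat) := FData {
  fob : nat -> finType ;
  fmor : forall n m : nat, mor (tens d n) (tens d m) -> mor (fob n) (fob m) }.
Arguments fob {d} f n.
Arguments fmor {d} f {n m} _ _ _.
Arguments FData {d} fob fmor.

Definition IsFunctor (Hom : HomPred) (d : nat) (F : fdata d) : Prop :=
  [/\ (forall n m (c : k) (f g : mor (tens d n) (tens d m)),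
         (0 < n)%N -> (0 < m)%N -> Hom d n m f -> Hom d n m g ->
         fmor F (fun x y => c * f x y + g x y) =
         (fun x y => c * fmor F f x y + fmor F g x y)),
      (forall n, (0 < n)%N -> fmor F (@idm (tens d n)) = @idm (fob F n)) &
      (forall n m p (f : mor (tens d n) (tens d m)) (g : mor (tens d m) (tens d p)),
         (0 < n)%N -> (0 < m)%N -> (0 < p)%N ->
         Hom d n m f -> Hom d m p g ->
         fmor F (comp f g) = comp (fmor F f) (fmor F g))].

Definition casttup (d d' n : nat) (h : d = d') (x : tens d n) : tens d' n :=
  [ffun i => x (cast_ord (esym h) i)].

Definition castmor (d d' n m : nat) (h : d = d') (f : mor (tens d' n) (tens d' m)) :
  mor (tens d n) (tens d m) := fun x y => f (casttup h x) (casttup h y).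

Definition ntrans (d d' : nat) (F : fdata d) (G : fdata d') :=
  forall n, mor (fob F n) (fob G n).

Definition IsNatC (Hom : HomPred) (d d' : nat) (h : d = d') (F : fdata d)
   (G : fdata d') (eta : ntrans F G) : Prop :=
  forall n m (f : mor (tens d' n) (tens d' m)),
    (0 < n)%N -> (0 < m)%N -> Hom d' n m f ->
    comp (fmor F (castmor h f)) (eta m) = comp (eta n) (fmor G f).

Arguments IsNatC Hom {d d'} h F G eta.

Definition IsNat (Hom : HomPred) (d : nat) (F G : fdata d) (eta : ntrans F G) :=
  IsNatC Hom (erefl d) F G eta.

Definition nid (d : nat) (F : fdata d) : ntrans F F := fun n => @idm (fob F n).

(* categorical composition f1 o f2 (first f2, then f1) *)
Definition ncomp (d1 d2 d3 : nat) (F1 : fdata d1) (F2 : fdata d2) (F3 : fdata d3)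
  (f1 : ntrans F2 F3) (f2 : ntrans F1 F2) : ntrans F1 F3 :=
  fun n => comp (f2 n) (f1 n).

Definition splitL (d1 d2 n : nat) (x : tens (d1 + d2) n) : tens d1 n :=
  [ffun i => x (lshift d2 i)].
Definition splitR (d1 d2 n : nat) (x : tens (d1 + d2) n) : tens d2 n :=
  [ffun i => x (rshift d1 i)].

Definition tensmor (d1 d2 n m : nat) (a : mor (tens d1 n) (tens d1 m))
  (b : mor (tens d2 n) (tens d2 m)) : mor (tens (d1 + d2) n) (tens (d1 + d2) m) :=
  fun x y => a (splitL x) (splitL y) * b (splitR x) (splitR y).

Definition is_decomp (Hom1 Hom2 : HomPred) (d1 d2 n m : nat)
  (phi : mor (tens (d1 + d2) n) (tens (d1 + d2) m))
  (s : seq (mor (tens d1 n) (tens d1 m) * mor (tens d2 n) (tens d2 m))) : Prop :=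
  (forall p, List.In p s -> Hom1 d1 n m p.1 /\ Hom2 d2 n m p.2) /\
  phi = (fun x y => \sum_(p <- s) tensmor p.1 p.2 x y).

Definition decomp_of (Hom1 Hom2 : HomPred) (d1 d2 n m : nat)
  (phi : mor (tens (d1 + d2) n) (tens (d1 + d2) m)) :=
  epsilon (inhabits [::]) (is_decomp Hom1 Hom2 phi).

(* The product of functors F (degree d1) and G (degree d2):
   value F(V_n) (x) G(V_n); on a morphism phi, decompose (the restriction
   of) phi as sum a_i (x) b_i and send it to sum F(a_i) (x) G(b_i). *)
Definition prodF (Hom1 Hom2 : HomPred) (d1 d2 : nat) (F : fdata d1) (G : fdata d2) :
  fdata (d1 + d2) :=
  @FData (d1 + d2) (fun n => (fob F n * fob G n)%type)
    (fun n m phi x y =>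
       \sum_(p <- decomp_of Hom1 Hom2 phi) tensm (fmor F p.1) (fmor G p.2) x y).

Definition HA : HomPred := HomA.
Definition HB : HomPred := HomB.

Definition tensAP (d e : nat) (F : fdata d) (G : fdata e) : fdata (d + e) :=
  prodF HA HA F G.
Definition actP (e d : nat) (G : fdata e) (F : fdata d) : fdata (e + d) :=
  prodF HB HA G F.

(* the unit: the degree-0 functor with value k (basis: unit) *)
Definition unitAP : fdata 0 :=
  @FData 0 (fun _ => unit : finType)
    (fun n m phi _ _ => \sum_(t : tens 0 n) \sum_(t' : tens 0 m) phi t t').

Definition nprod (Hom1 Hom2 : HomPred) (d1 d2 d1' d2' : nat) (F : fdata d1)
  (F' : fdata d1') (G : fdata d2) (G' : fdata d2') (f : ntrans F F')
  (g : ntrans G G') : ntrans (prodF Hom1 Hom2 F G) (prodF Hom1 Hom2 F' G') :=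
  fun n => tensm (f n) (g n).
Arguments nprod Hom1 Hom2 {d1 d2 d1' d2' F F' G G'} f g n _ _.

Definition ntens (d1 d2 d1' d2' : nat) (F : fdata d1) (F' : fdata d1')
  (G : fdata d2) (G' : fdata d2') (f : ntrans F F') (g : ntrans G G') :
  ntrans (tensAP F G) (tensAP F' G') := nprod HA HA f g.

Definition nact (d1 d2 d1' d2' : nat) (F : fdata d1) (F' : fdata d1')
  (G : fdata d2) (G' : fdata d2') (f : ntrans F F') (g : ntrans G G') :
  ntrans (actP F G) (actP F' G') := nprod HB HA f g.

Definition assocAP (d1 d2 d3 : nat) (X1 : fdata d1) (X2 : fdata d2) (X3 : fdata d3) :
  ntrans (tensAP (tensAP X1 X2) X3) (tensAP X1 (tensAP X2 X3)) :=
  fun n x y => (y == (x.1.1, (x.1.2, x.2)))%:R.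

Definition lunitAP (d : nat) (X : fdata d) : ntrans (tensAP unitAP X) X :=
  fun n x y => (y == x.2)%:R.

Definition lam (e d1 d2 : nat) (Y : fdata e) (X1 : fdata d1) (X2 : fdata d2) :
  ntrans (actP Y (tensAP X1 X2)) (actP (actP Y X1) X2) :=
  fun n x y => (y == ((x.1, x.2.1), x.2.2))%:R.

Definition rho (e : nat) (Y : fdata e) : ntrans (actP Y unitAP) Y :=
  fun n x y => (y == x.1)%:R.

End HeckeDefs.

Arguments IsNatC {k} Hom {d d'} h F G eta.
Arguments nid {k d} F n _ _.
Arguments ncomp {k d1 d2 d3 F1 F2 F3} f1 f2 n _ _.
Arguments ntens {k} q {d1 d2 d1' d2' F F' G G'} f g n _ _.
Arguments nact {k} Q q {d1 d2 d1' d2' F F' G G'} f g n _ _.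
Arguments assocAP {k} q {d1 d2 d3} X1 X2 X3 n _ _.
Arguments lunitAP {k} q {d} X n _ _.
Arguments lam {k} Q q {e d1 d2} Y X1 X2 n _ _.
Arguments rho {k} Q q {e} Y n _ _.

From HB Require Import structures.
From mathcomp Require Import all_boot all_algebra.
From Stdlib Require Import ClassicalEpsilon FunctionalExtensionality.
From Stdlib Require List.
Set Implicit Arguments.
Unset Strict Implicit.
Unset Printing Implicit Defensive.
Import GRing.Theory.
Local Open Scope ring_scope.

(* The structure maps lambda, rho and the associator are the canonical
   identifications of tensor products of bases, so the coherence conditions
   hold on the nose; the content is that * is well defined and functorial.
   Restricting phi in Hom_{H(e+d)} to H(e) (x) H(d) makes all its slices
   H(e)- resp. H(d)-morphisms, and a tensor whose slices lie in two subspaces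
   lies in their tensor product; so phi = sum a_i (x) b_i with a_i, b_i
   morphisms, and (G * F)(phi) = sum G(a_i) (x) F(b_i) does not depend on the
   choice because G and F are linear.  Functoriality and naturality then hold
   termwise; for lambda, a decomposition along (e + d1) + d2 is refined into
   one along e + (d1 + d2) whose second factors lie in H(d1) (x) H(d2). *)

Lemma funext2 (A B C : Type) (f g : A -> B -> C) : (forall a b, f a b = g a b) -> f = g.
Proof.
move=> fg; apply: functional_extensionality => a.
by apply: functional_extensionality => b; apply: fg.
Qed.

Lemma In_map (A B : Type) (f : A -> B) (s : seq A) y :
  List.In y (map f s) -> exists2 x, List.In x s & y = f x.
Proof.
elim: s => [|a s IH] //= [<-|/IH [x xs ->]]; first by exists a; [left|].
by exists x; [right|].
Qed.

Lemma In_cat (A : Type) (s1 s2 : seq A) y :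
  List.In y (s1 ++ s2) -> List.In y s1 \/ List.In y s2.
Proof. by elim: s1 => [|a s IH] /=; [right | case=> [<-|/IH[]]; tauto]. Qed.

Lemma In_flatten (A : Type) (ss : seq (seq A)) y :
  List.In y (flatten ss) -> exists2 s, List.In s ss & List.In y s.
Proof.
elim: ss => [|s ss IH] //= y_in; case: (In_cat y_in) => [ys|/IH [t tss yt]].
  by exists s; [left|].
by exists t; [right|].
Qed.

Lemma In_nth (A : Type) (x0 : A) (s : seq A) i : (i < size s)%N -> List.In (nth x0 s i) s.
Proof. by elim: s i => [|a s IH] [|i] //= lti; [left | right; apply: IH]. Qed.

Lemma eq_big_In (R : Type) (idx : R) (op : R -> R -> R) (A : Type) (s : seq A)
    (F G : A -> R) :
  (forall p, List.In p s -> F p = G p) ->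
  \big[op/idx]_(p <- s) F p = \big[op/idx]_(p <- s) G p.
Proof.
elim: s => [|a s IH] FG; first by rewrite !big_nil.
by rewrite !big_cons FG ?IH //; [move=> p ps; apply: FG; right | left].
Qed.

Section Morphisms.
Variable k : fieldType.
Implicit Types A B C D : finType.

Lemma sum_delta_l (T : finType) (a : T) (F : T -> k) : \sum_(z : T) (a == z)%:R * F z = F a.
Proof.
rewrite (bigD1 a) //= eqxx mul1r big1 ?addr0 // => z /negbTE.
by rewrite eq_sym => ->; rewrite mul0r.
Qed.

Lemma sum_delta_r (T : finType) (a : T) (F : T -> k) : \sum_(z : T) F z * (z == a)%:R = F a.
Proof. by rewrite -[RHS](sum_delta_l a); apply: eq_bigr => z _; rewrite mulrC eq_sym. Qed.

Lemma comp_linearr A B C (h : mor k A B) c (f g : mor k B C) :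
  comp h (fun x y => c * f x y + g x y) = fun x y => c * comp h f x y + comp h g x y.
Proof.
apply: funext2 => x y; rewrite /comp mulr_sumr -big_split /=.
by apply: eq_bigr => b _; rewrite mulrDr mulrCA.
Qed.

Lemma comp_linearl A B C (h : mor k B C) c (f g : mor k A B) :
  comp (fun x y => c * f x y + g x y) h = fun x y => c * comp f h x y + comp g h x y.
Proof.
apply: funext2 => x y; rewrite /comp mulr_sumr -big_split /=.
by apply: eq_bigr => b _; rewrite mulrDl mulrA.
Qed.

Lemma comp0r A B C (h : mor k A B) : comp h (fun (_ : B) (_ : C) => 0) = fun _ _ => 0.
Proof. by apply: funext2 => x y; rewrite /comp big1 // => b _; rewrite mulr0. Qed.

Lemma comp0l A B C (h : mor k B C) : comp (fun (_ : A) (_ : B) => 0) h = fun _ _ => 0.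
Proof. by apply: funext2 => x y; rewrite /comp big1 // => b _; rewrite mul0r. Qed.

Lemma compA A B C D (f : mor k A B) (g : mor k B C) (h : mor k C D) :
  comp (comp f g) h = comp f (comp g h).
Proof.
apply: funext2 => x y; rewrite /comp; under eq_bigr do rewrite mulr_suml.
rewrite exchange_big; apply: eq_bigr => b _; rewrite mulr_sumr.
by apply: eq_bigr => c _; rewrite mulrA.
Qed.

Lemma comp1m A B (f : mor k A B) : comp (@idm k A) f = f.
Proof. by apply: funext2 => x y; rewrite /comp /idm sum_delta_l. Qed.

Lemma compm1 A B (f : mor k A B) : comp f (@idm k B) = f.
Proof. by apply: funext2 => x y; rewrite /comp /idm sum_delta_r. Qed.

Lemma comp_sumr A B C (X : Type) (s : seq X) (h : mor k A B) (f : X -> mor k B C) :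
  comp h (fun x y => \sum_(p <- s) f p x y) = fun x y => \sum_(p <- s) comp h (f p) x y.
Proof.
by apply: funext2 => x y; rewrite /comp; under eq_bigr do rewrite mulr_sumr; rewrite exchange_big.
Qed.

Lemma comp_suml A B C (X : Type) (s : seq X) (h : mor k B C) (f : X -> mor k A B) :
  comp (fun x y => \sum_(p <- s) f p x y) h = fun x y => \sum_(p <- s) comp (f p) h x y.
Proof.
by apply: funext2 => x y; rewrite /comp; under eq_bigr do rewrite mulr_suml; rewrite exchange_big.
Qed.

Lemma comp_tensm A1 B1 C1 A2 B2 C2 (f : mor k A1 B1) (f' : mor k B1 C1)
    (g : mor k A2 B2) (g' : mor k B2 C2) :
  comp (tensm f g) (tensm f' g') = tensm (comp f f') (comp g g').
Proof.
apply: funext2 => x y; rewrite /comp /tensm mulr_suml.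
under [RHS]eq_bigr do rewrite mulr_sumr.
by rewrite pair_big; apply: eq_bigr => -[z1 z2] _; rewrite mulrACA.
Qed.

Lemma tensm1 A B : tensm (@idm k A) (@idm k B) = @idm k (A * B)%type.
Proof. by apply: funext2 => -[a b] [c d]; rewrite /tensm /idm -natrM mulnb. Qed.

Lemma comp_graphl A B C (u : A -> B) (h : mor k B C) :
  comp (fun x z => (z == u x)%:R) h = fun x y => h (u x) y.
Proof.
apply: funext2 => x y; rewrite /comp -[RHS](sum_delta_l (u x) (h^~ y)).
by apply: eq_bigr => z _; rewrite eq_sym.
Qed.

Lemma comp_graphr A B C (u : B -> C) (v : C -> B) (h : mor k A B) :
  cancel u v -> cancel v u -> comp h (fun z y => (y == u z)%:R) = fun x y => h x (v y).
Proof.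
move=> uK vK; apply: funext2 => x y; rewrite /comp -[RHS](sum_delta_r (v y) (h x)).
apply: eq_bigr => z _; congr (_ * (nat_of_bool _)%:R).
by apply/idP/idP => /eqP ->; rewrite ?uK ?vK.
Qed.

End Morphisms.

Section TensorDecomposition.
Variable k : fieldType.
Implicit Types A B C D : finType.

Definition mor_subspace A B (P : mor k A B -> Prop) :=
  P (fun _ _ => 0) /\ forall c f g, P f -> P g -> P (fun x y => c * f x y + g x y).

Definition mor_linear A B C D (P : mor k A B -> Prop) (Phi : mor k A B -> mor k C D) :=
  forall c f g, P f -> P g ->
    Phi (fun x y => c * f x y + g x y) = fun x y => c * Phi f x y + Phi g x y.

Lemma mor_linear0 A B C D (P : mor k A B -> Prop) (Phi : mor k A B -> mor k C D) :
  mor_subspace P -> mor_linear P Phi -> Phi (fun _ _ => 0) = fun _ _ => 0.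
Proof.
move=> [P0 _] linPhi; have := linPhi 1 _ _ P0 P0.
have -> : (fun (_ : A) (_ : B) => 1 * 0 + 0) = fun _ _ => 0 :> k.
  by apply: funext2 => a b; rewrite mul1r addr0.
move=> Phi0; apply: funext2 => x y; have := congr1 (fun f => f x y) Phi0.
by rewrite /= mul1r => /eqP; rewrite -subr_eq subrr eq_sym => /eqP.
Qed.

Lemma mor_subspaceZ A B (P : mor k A B -> Prop) c f :
  mor_subspace P -> P f -> P (fun x y => c * f x y).
Proof.
move=> [P0 PD] Pf; have -> : (fun x y => c * f x y) = fun x y => c * f x y + 0.
  by apply: funext2 => x y; rewrite addr0.
exact: PD.
Qed.

Lemma mor_linearZ A B C D (P : mor k A B -> Prop) (Phi : mor k A B -> mor k C D) c f :
  mor_subspace P -> mor_linear P Phi -> P f ->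
  Phi (fun x y => c * f x y) = fun x y => c * Phi f x y.
Proof.
move=> SP linPhi Pf; have -> : (fun x y => c * f x y) = fun x y => c * f x y + 0.
  by apply: funext2 => x y; rewrite addr0.
rewrite (linPhi _ _ _ Pf SP.1) (mor_linear0 SP linPhi).
by apply: funext2 => x y; rewrite addr0.
Qed.

Lemma mor_subspace_sum A B (X : Type) (P : mor k A B -> Prop) (s : seq X)
    (c : X -> k) (f : X -> mor k A B) :
  mor_subspace P -> (forall p, List.In p s -> P (f p)) ->
  P (fun x y => \sum_(p <- s) c p * f p x y).
Proof.
move=> [P0 PD]; elim: s => [|p s IH] Pf.
  by under [fun _ _ => _]funext2 do rewrite big_nil.
under [fun _ _ => _]funext2 do rewrite big_cons.
by apply: PD; [apply: Pf; left | apply: IH => r rs; apply: Pf; right].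
Qed.

Lemma mor_linear_sum A B C D (X : Type) (P : mor k A B -> Prop) (Phi : mor k A B -> mor k C D)
    (s : seq X) (c : X -> k) (f : X -> mor k A B) :
  mor_subspace P -> mor_linear P Phi -> (forall p, List.In p s -> P (f p)) ->
  Phi (fun x y => \sum_(p <- s) c p * f p x y) = fun x y => \sum_(p <- s) c p * Phi (f p) x y.
Proof.
move=> SP linPhi; elim: s => [|p s IH] Pf.
  under [fun _ _ => _]funext2 do rewrite big_nil.
  by rewrite (mor_linear0 SP linPhi); apply: funext2 => x y; rewrite big_nil.
under [fun _ _ => _]funext2 do rewrite big_cons.
have Pfs : forall r, List.In r s -> P (f r) by move=> r rs; apply: Pf; right.
rewrite linPhi ?IH //; [|by apply: Pf; left | exact: mor_subspace_sum].
by apply: funext2 => x y; rewrite big_cons.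
Qed.

Definition pairs_in A1 B1 A2 B2 (P1 : mor k A1 B1 -> Prop) (P2 : mor k A2 B2 -> Prop)
  (s : seq (mor k A1 B1 * mor k A2 B2)) : Prop :=
  forall p, List.In p s -> P1 p.1 /\ P2 p.2.

(* [tensor_sum s] represents sum_(p in s) p.1 (x) p.2 in mor A1 B1 (x) mor A2 B2. *)
Definition tensor_sum A1 B1 A2 B2 (s : seq (mor k A1 B1 * mor k A2 B2)) :
  A1 -> B1 -> A2 -> B2 -> k :=
  fun a1 b1 a2 b2 => \sum_(p <- s) p.1 a1 b1 * p.2 a2 b2.

(* Rank factorisation M = C *m R of the matrix M whose rows are the b_i: the
   rows beta_j of R are combinations of the b_i, the columns of C are
   combinations of the columns of M, and relations v among the b_i are
   relations among the rows of C since R has a right inverse. *)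
Lemma span_basis A B (P : mor k A B -> Prop) N (b : 'I_N -> mor k A B) :
  mor_subspace P -> (forall i, P (b i)) ->
  exists r (beta : 'I_r -> mor k A B) (C : 'M[k]_(N, r)),
    [/\ forall j, P (beta j),
        forall i, b i = (fun x y => \sum_j C i j * beta j x y),
        exists Y : 'M_(#|{: A * B}|, r),
          forall i j, C i j = \sum_c Y c j * b i (enum_val c).1 (enum_val c).2 &
        forall v : 'rV_N, (forall x y, \sum_i v 0 i * b i x y = 0) -> v *m C = 0].
Proof.
move=> SP Pb; pose M := \matrix_(i < N, c < #|{: A * B}|) b i (enum_val c).1 (enum_val c).2.
have [X rbX] : exists X, row_base M = X *m M by apply/submxP; rewrite eq_row_base.
have [Y rbY] : exists Y, row_base M *m Y = 1%:M by apply/row_freeP; exact: row_base_free.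
exists (\rank M), (fun j x y => row_base M j (enum_rank (x, y))); exists (col_base M); split.
- move=> j; have -> : (fun x y => row_base M j (enum_rank (x, y))) =
      fun x y => \sum_(i <- index_enum _) X j i * b i x y.
    apply: funext2 => x y; rewrite rbX mxE.
    by apply: eq_bigr => i _; rewrite mxE enum_rankK.
  exact: mor_subspace_sum.
- move=> i; apply: funext2 => x y.
  have /matrixP/(_ i (enum_rank (x, y))) := mulmx_base M.
  by rewrite !mxE enum_rankK => <-.
- exists Y => i j; have := congr1 (mulmx^~ Y) (mulmx_base M).
  rewrite /= -mulmxA rbY mulmx1 => ->; rewrite mxE.
  by apply: eq_bigr => c _; rewrite mxE mulrC.
- move=> v v0; have vM : v *m M = 0.
    apply/matrixP => z c; rewrite [z]ord1 !mxE -[RHS](v0 (enum_val c).1 (enum_val c).2).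
    by apply: eq_bigr => i _; rewrite !mxE.
  by rewrite -[LHS]mulmx1 -rbY mulmxA -(mulmxA v) mulmx_base vM !mul0mx.
Qed.

Lemma tensor_sum_exists A1 B1 A2 B2 (P1 : mor k A1 B1 -> Prop) (P2 : mor k A2 B2 -> Prop)
    (phi : A1 -> B1 -> A2 -> B2 -> k) :
  mor_subspace P1 -> mor_subspace P2 ->
  (forall a2 b2, P1 (fun a1 b1 => phi a1 b1 a2 b2)) -> (forall a1 b1, P2 (phi a1 b1)) ->
  exists2 s, pairs_in P1 P2 s & phi = tensor_sum s.
Proof.
move=> S1 S2 slice1 slice2.
pose b (i : 'I_#|{: A1 * B1}|) := phi (enum_val i).1 (enum_val i).2.
have [r [beta [C [Pbeta b_beta [Y CY] _]]]] := span_basis (b := b) S2 (fun i => slice2 _ _).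
pose alpha j a1 b1 := C (enum_rank (a1, b1)) j.
exists [seq (alpha j, beta j) | j <- index_enum 'I_r].
  move=> p p_in; have [j _ ->] := In_map p_in; split=> //=.
  have -> : alpha j = fun a1 b1 =>
      \sum_(c <- index_enum _) Y c j * phi a1 b1 (enum_val c).1 (enum_val c).2.
    by apply: funext2 => a1 b1; rewrite /alpha CY /b enum_rankK.
  by apply: mor_subspace_sum => // c _; apply: slice1.
apply: funext2 => a1 b1; apply: funext2 => a2 b2; rewrite /tensor_sum big_map.
by have := b_beta (enum_rank (a1, b1)); rewrite /b enum_rankK /= => ->.
Qed.

(* Writing the second factors b_i = sum_j C_ij beta_j in a basis, a vanishing
   tensor sum makes every combination sum_i C_ij a_i of the first factors
   vanish; linearity of Phi1 and Phi2 then kills the image. *)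
Lemma tensor_sum_map0 A1 B1 A2 B2 C1 D1 C2 D2 (P1 : mor k A1 B1 -> Prop)
    (P2 : mor k A2 B2 -> Prop) (Phi1 : mor k A1 B1 -> mor k C1 D1)
    (Phi2 : mor k A2 B2 -> mor k C2 D2) (s : seq (mor k A1 B1 * mor k A2 B2)) :
  mor_subspace P1 -> mor_subspace P2 -> mor_linear P1 Phi1 -> mor_linear P2 Phi2 ->
  pairs_in P1 P2 s -> tensor_sum s = (fun _ _ _ _ => 0) ->
  tensor_sum [seq (Phi1 p.1, Phi2 p.2) | p <- s] = fun _ _ _ _ => 0.
Proof.
move=> S1 S2 L1 L2 sP s0.
pose x0 := (fun (_ : A1) (_ : B1) => 0 : k, fun (_ : A2) (_ : B2) => 0 : k).
pose a (i : 'I_(size s)) := (nth x0 s i).1.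
pose b (i : 'I_(size s)) := (nth x0 s i).2.
have Pa i : P1 (a i) by have [] := sP _ (In_nth x0 (ltn_ord i)).
have Pb i : P2 (b i) by have [] := sP _ (In_nth x0 (ltn_ord i)).
have [r [beta [C [Pbeta b_beta _ rel]]]] := span_basis S2 Pb.
have alpha0 j : (fun a1 b1 => \sum_i C i j * a i a1 b1) = fun _ _ => 0.
  apply: funext2 => a1 b1.
  have rel_a a2 b2 : \sum_i (\row_i a i a1 b1) 0 i * b i a2 b2 = 0.
    have := congr1 (fun t => t a1 b1 a2 b2) s0.
    rewrite /tensor_sum (big_nth x0) big_mkord => s0_a; apply: etrans s0_a.
    by apply: eq_bigr => i _; rewrite mxE.
  have /matrixP/(_ 0 j) := rel _ rel_a; rewrite !mxE => s0_j; apply: etrans s0_j.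
  by apply: eq_bigr => i _; rewrite mxE mulrC.
apply: funext2 => c1 d1; apply: funext2 => c2 d2.
rewrite /tensor_sum big_map (big_nth x0) big_mkord /=.
change (\sum_(i < size s) Phi1 (a i) c1 d1 * Phi2 (b i) c2 d2 = 0).
transitivity (\sum_j Phi2 (beta j) c2 d2 * Phi1 (fun a1 b1 => \sum_i C i j * a i a1 b1) c1 d1).
  under eq_bigr do rewrite b_beta (mor_linear_sum _ S2 L2) // mulr_sumr.
  under [RHS]eq_bigr do rewrite (mor_linear_sum _ S1 L1) // mulr_sumr.
  rewrite exchange_big /=; apply: eq_bigr => i _; apply: eq_bigr => j _.
  by rewrite mulrCA [RHS]mulrCA [_ * Phi2 _ _ _]mulrC.
by rewrite big1 // => j _; rewrite alpha0 (mor_linear0 S1 L1) mulr0.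
Qed.

Lemma tensor_sum_map A1 B1 A2 B2 C1 D1 C2 D2 (P1 : mor k A1 B1 -> Prop)
    (P2 : mor k A2 B2 -> Prop) (Phi1 : mor k A1 B1 -> mor k C1 D1)
    (Phi2 : mor k A2 B2 -> mor k C2 D2) (s s' : seq (mor k A1 B1 * mor k A2 B2)) :
  mor_subspace P1 -> mor_subspace P2 -> mor_linear P1 Phi1 -> mor_linear P2 Phi2 ->
  pairs_in P1 P2 s -> pairs_in P1 P2 s' -> tensor_sum s = tensor_sum s' ->
  tensor_sum [seq (Phi1 p.1, Phi2 p.2) | p <- s] =
  tensor_sum [seq (Phi1 p.1, Phi2 p.2) | p <- s'].
Proof.
move=> S1 S2 L1 L2 sP s'P ss'.
pose opp (p : mor k A1 B1 * mor k A2 B2) := (fun x y => -1 * p.1 x y, p.2).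
have diffP : pairs_in P1 P2 (s ++ map opp s').
  move=> p p_in; have [/sP //|opp_in] := In_cat p_in.
  by have [r /s'P [P1r P2r] ->] := In_map opp_in; split=> //; apply: mor_subspaceZ.
have diff0 : tensor_sum (s ++ map opp s') = fun _ _ _ _ => 0.
  apply: funext2 => a1 b1; apply: funext2 => a2 b2.
  have := congr1 (fun t => t a1 b1 a2 b2) ss'; rewrite /tensor_sum big_cat big_map /= => ->.
  by rewrite -big_split big1 // => p _ /=; rewrite mulN1r mulNr subrr.
have := tensor_sum_map0 S1 S2 L1 L2 diffP diff0.
move=> /(congr1 (fun t => t _ _ _ _)) img0.
apply: funext2 => c1 d1; apply: funext2 => c2 d2.
have := img0 c1 d1 c2 d2; rewrite /tensor_sum map_cat big_cat !big_map /=.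
rewrite (@eq_big_In _ _ _ _ s' _ (fun p => - (Phi1 p.1 c1 d1 * Phi2 p.2 c2 d2))); last first.
  by move=> p /s'P [P1p _]; rewrite (mor_linearZ _ S1 L1) // mulN1r mulNr.
by rewrite sumrN => /eqP; rewrite subr_eq0 => /eqP.
Qed.

End TensorDecomposition.

Lemma split_lshift m n (i : 'I_m) : split (lshift n i) = inl i.
Proof. exact: (unsplitK (inl i)). Qed.

Lemma split_rshift m n (i : 'I_n) : split (rshift m i) = inr i.
Proof. exact: (unsplitK (inr i)). Qed.

Definition merge d1 d2 n (x1 : tens d1 n) (x2 : tens d2 n) : tens (d1 + d2) n :=
  [ffun i => match split i with inl a => x1 a | inr b => x2 b end].

Lemma splitL_merge d1 d2 n (x1 : tens d1 n) (x2 : tens d2 n) : splitL (merge x1 x2) = x1.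
Proof. by apply/ffunP => i; rewrite !ffunE split_lshift. Qed.

Lemma splitR_merge d1 d2 n (x1 : tens d1 n) (x2 : tens d2 n) : splitR (merge x1 x2) = x2.
Proof. by apply/ffunP => i; rewrite !ffunE split_rshift. Qed.

Lemma merge_split d1 d2 n (x : tens (d1 + d2) n) : merge (splitL x) (splitR x) = x.
Proof.
by apply/ffunP => i; rewrite !ffunE -{2}(splitK i); case: (split i) => a; rewrite ffunE.
Qed.

Lemma forall_split d1 d2 (P : pred 'I_(d1 + d2)) :
  [forall j, P j] = [forall j, P (lshift d2 j)] && [forall j, P (rshift d1 j)].
Proof.
apply/forallP/andP => [Pj|[/forallP Pl /forallP Pr] j]; first by split; apply/forallP => j.
by rewrite -(splitK j); case: (split j).
Qed.

Lemma forall_fixed_splitL d1 d2 n (P : pred 'I_(d1 + d2)) (x y : tens (d1 + d2) n) :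
  (forall j, P (rshift d1 j)) ->
  [forall j, P j ==> (x j == y j)] =
  [forall j, P (lshift d2 j) ==> (splitL x j == splitL y j)] && (splitR x == splitR y).
Proof.
move=> Pr; rewrite forall_split; congr (_ && _).
  by apply: eq_forallb => j; rewrite !ffunE.
apply/forallP/eqP => [xy|/ffunP xy j].
  by apply/ffunP => j; rewrite !ffunE; have := xy j; rewrite Pr => /eqP.
by rewrite Pr; have := xy j; rewrite !ffunE => ->; rewrite eqxx.
Qed.

Lemma forall_fixed_splitR d1 d2 n (P : pred 'I_(d1 + d2)) (x y : tens (d1 + d2) n) :
  (forall j, P (lshift d2 j)) ->
  [forall j, P j ==> (x j == y j)] =
  (splitL x == splitL y) && [forall j, P (rshift d1 j) ==> (splitR x j == splitR y j)].
Proof.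
move=> Pl; rewrite forall_split; congr (_ && _); last first.
  by apply: eq_forallb => j; rewrite !ffunE.
apply/forallP/eqP => [xy|/ffunP xy j].
  by apply/ffunP => j; rewrite !ffunE; have := xy j; rewrite Pl => /eqP.
by rewrite Pl; have := xy j; rewrite !ffunE => ->; rewrite eqxx.
Qed.

Section TensorPowers.
Variable k : fieldType.

Lemma sum_tens_add d1 d2 n (F : tens (d1 + d2) n -> k) :
  \sum_(z : tens (d1 + d2) n) F z = \sum_(z1 : tens d1 n) \sum_(z2 : tens d2 n) F (merge z1 z2).
Proof.
rewrite pair_bigA /= (reindex (fun p : tens d1 n * tens d2 n => merge p.1 p.2)) //.
apply: onW_bij; exists (fun z => (splitL z, splitR z)) => [[x1 x2]|z] /=.
  by rewrite splitL_merge splitR_merge.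
by rewrite merge_split.
Qed.

Lemma tensmor_merge d1 d2 n m (f : mor k (tens d1 n) (tens d1 m))
    (g : mor k (tens d2 n) (tens d2 m)) x1 x2 y1 y2 :
  tensmor f g (merge x1 x2) (merge y1 y2) = f x1 y1 * g x2 y2.
Proof. by rewrite /tensmor !splitL_merge !splitR_merge. Qed.

Lemma comp_tensmor d1 d2 n m p (f : mor k (tens d1 n) (tens d1 m))
    (f' : mor k (tens d1 m) (tens d1 p))
    (g : mor k (tens d2 n) (tens d2 m)) (g' : mor k (tens d2 m) (tens d2 p)) :
  comp (tensmor f g) (tensmor f' g') = tensmor (comp f f') (comp g g').
Proof.
apply: funext2 => x y; rewrite {3}/tensmor /comp sum_tens_add mulr_suml.
apply: eq_bigr => z1 _; rewrite mulr_sumr; apply: eq_bigr => z2 _.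
by rewrite /tensmor !splitL_merge !splitR_merge mulrACA.
Qed.

Lemma tensmor1 d1 d2 n :
  tensmor (@idm k (tens d1 n)) (@idm k (tens d2 n)) = @idm k (tens (d1 + d2) n).
Proof.
apply: funext2 => x y; rewrite /tensmor /idm -natrM mulnb; congr (nat_of_bool _)%:R.
apply/andP/eqP => [[/eqP xy1 /eqP xy2]|->]; last by rewrite !eqxx.
by rewrite -(merge_split x) -(merge_split y) xy1 xy2.
Qed.

Definition slicel d1 d2 n m (phi : mor k (tens (d1 + d2) n) (tens (d1 + d2) m)) x2 y2 :
  mor k (tens d1 n) (tens d1 m) := fun x1 y1 => phi (merge x1 x2) (merge y1 y2).

Definition slicer d1 d2 n m (phi : mor k (tens (d1 + d2) n) (tens (d1 + d2) m)) x1 y1 :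
  mor k (tens d2 n) (tens d2 m) := fun x2 y2 => phi (merge x1 x2) (merge y1 y2).

Lemma is_decomp_exists (Hom1 Hom2 : HomPred k) d1 d2 n m
    (phi : mor k (tens (d1 + d2) n) (tens (d1 + d2) m)) :
  mor_subspace (Hom1 d1 n m) -> mor_subspace (Hom2 d2 n m) ->
  (forall x2 y2, Hom1 d1 n m (slicel phi x2 y2)) ->
  (forall x1 y1, Hom2 d2 n m (slicer phi x1 y1)) ->
  exists s, is_decomp Hom1 Hom2 phi s.
Proof.
move=> S1 S2 Hl Hr.
have [s sP E] := tensor_sum_exists S1 S2 Hl Hr; exists s; split=> //.
apply: funext2 => x y; have := congr1 (fun t => t (splitL x) (splitL y) (splitR x) (splitR y)) E.
by rewrite /= !merge_split.
Qed.

Lemma tensor_sum_tensmor d1 d2 n m (phi : mor k (tens (d1 + d2) n) (tens (d1 + d2) m)) s :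
  phi = (fun x y => \sum_(p <- s) tensmor p.1 p.2 x y) ->
  tensor_sum s = fun x1 y1 x2 y2 => phi (merge x1 x2) (merge y1 y2).
Proof.
move=> ->; apply: funext2 => x1 y1; apply: funext2 => x2 y2.
by apply: eq_bigr => p _; rewrite tensmor_merge.
Qed.

Lemma comp_tensmorl_slice d1 d2 n m (T : mor k (tens d1 n) (tens d1 n))
    (phi : mor k (tens (d1 + d2) n) (tens (d1 + d2) m)) x1 x2 y1 y2 :
  comp (tensmor T (@idm k _)) phi (merge x1 x2) (merge y1 y2) = comp T (slicel phi x2 y2) x1 y1.
Proof.
rewrite /comp sum_tens_add; apply: eq_bigr => z1 _.
under eq_bigr do rewrite tensmor_merge -mulrA.
by rewrite -mulr_sumr sum_delta_l.
Qed.

Lemma comp_slice_tensmorl d1 d2 n m (T : mor k (tens d1 m) (tens d1 m))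
    (phi : mor k (tens (d1 + d2) n) (tens (d1 + d2) m)) x1 x2 y1 y2 :
  comp phi (tensmor T (@idm k _)) (merge x1 x2) (merge y1 y2) = comp (slicel phi x2 y2) T x1 y1.
Proof.
rewrite /comp sum_tens_add; apply: eq_bigr => z1 _.
under eq_bigr do rewrite tensmor_merge mulrCA.
by rewrite -mulr_sumr sum_delta_r mulrC.
Qed.

Lemma comp_tensmorr_slice d1 d2 n m (T : mor k (tens d2 n) (tens d2 n))
    (phi : mor k (tens (d1 + d2) n) (tens (d1 + d2) m)) x1 x2 y1 y2 :
  comp (tensmor (@idm k _) T) phi (merge x1 x2) (merge y1 y2) = comp T (slicer phi x1 y1) x2 y2.
Proof.
rewrite /comp sum_tens_add exchange_big; apply: eq_bigr => z2 _.
under eq_bigr do rewrite tensmor_merge mulrAC -mulrA.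
by rewrite sum_delta_l mulrC.
Qed.

Lemma comp_slice_tensmorr d1 d2 n m (T : mor k (tens d2 m) (tens d2 m))
    (phi : mor k (tens (d1 + d2) n) (tens (d1 + d2) m)) x1 x2 y1 y2 :
  comp phi (tensmor (@idm k _) T) (merge x1 x2) (merge y1 y2) = comp (slicer phi x1 y1) T x2 y2.
Proof.
rewrite /comp sum_tens_add exchange_big; apply: eq_bigr => z2 _.
under eq_bigr do rewrite tensmor_merge mulrA mulrAC.
by rewrite sum_delta_r.
Qed.

End TensorPowers.

Lemma decomp_ofP (k : fieldType) (Hom1 Hom2 : HomPred k) d1 d2 n m
    (phi : mor k (tens (d1 + d2) n) (tens (d1 + d2) m)) :
  (exists s, is_decomp Hom1 Hom2 phi s) -> is_decomp Hom1 Hom2 phi (decomp_of Hom1 Hom2 phi).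
Proof. by move=> [s phi_s]; apply: epsilon_spec; exists s. Qed.

Section HeckeHoms.
Variables (k : fieldType) (Q q : k).

Lemma HA_subspace d n m : mor_subspace (@HA k q d n m).
Proof.
split=> [p p' _|c f g Hf Hg p p' pp']; first by rewrite comp0r comp0l.
by rewrite comp_linearr comp_linearl Hf ?Hg.
Qed.

Lemma HB_subspace d n m : mor_subspace (@HB k Q q d n m).
Proof.
split=> [|c f g [Hf Kf] [Hg Kg]]; split.
- exact: (HA_subspace d n m).1.
- by move=> p _; rewrite comp0r comp0l.
- exact: (HA_subspace d n m).2.
- by move=> p p0; rewrite comp_linearr comp_linearl Kf ?Kg.
Qed.

Lemma HA_comp d n m p (f : mor k (tens d n) (tens d m)) (g : mor k (tens d m) (tens d p)) :
  HA q f -> HA q g -> HA q (comp f g).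
Proof. by move=> Hf Hg i i' ii'; rewrite -compA Hf // compA Hg // -compA. Qed.

Lemma HB_comp d n m p (f : mor k (tens d n) (tens d m)) (g : mor k (tens d m) (tens d p)) :
  HB Q q f -> HB Q q g -> HB Q q (comp f g).
Proof.
move=> [Hf Kf] [Hg Kg]; split; first exact: HA_comp.
by move=> i i0; rewrite -compA Kf // compA Kg // -compA.
Qed.

Lemma HA_idm d n : HA q (@idm k (tens d n)).
Proof. by move=> p p' _; rewrite comp1m compm1. Qed.

Lemma HB_idm d n : HB Q q (@idm k (tens d n)).
Proof. by split=> [|p _]; [exact: HA_idm | rewrite comp1m compm1]. Qed.

Lemma HA_deg0 n m (f : mor k (tens 0 n) (tens 0 m)) : HA q f.
Proof. by case. Qed.

Lemma Tpair_lshift d1 d2 n (p p' : 'I_d1) :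
  Tpair q (lshift d2 p) (lshift d2 p') = tensmor (Tpair q (n := n) p p') (@idm k _).
Proof.
apply: funext2 => x y; rewrite /Tpair /tensmor /idm forall_fixed_splitL; last first.
  by move=> j; rewrite !eq_rlshift.
(* [lshift d2 j == lshift d2 p] is convertible to [j == p]. *)
by rewrite -mulnb natrM mulrA !ffunE.
Qed.

Lemma Tpair_rshift d1 d2 n (p p' : 'I_d2) :
  Tpair q (rshift d1 p) (rshift d1 p') = tensmor (@idm k _) (Tpair q (n := n) p p').
Proof.
apply: funext2 => x y; rewrite /Tpair /tensmor /idm forall_fixed_splitR; last first.
  by move=> j; rewrite !eq_lrshift.
rewrite -mulnb natrM mulrCA !ffunE; congr (_ * (_ * (nat_of_bool _)%:R)).
by apply: eq_forallb => j; rewrite !eq_rshift.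
Qed.

Lemma Kfac_lshift d1 d2 n (p : 'I_d1) :
  Kfac Q (lshift d2 p) = tensmor (Kfac Q (n := n) p) (@idm k _).
Proof.
apply: funext2 => x y; rewrite /Kfac /tensmor /idm forall_fixed_splitL; last first.
  by move=> j; rewrite eq_rlshift.
by rewrite -mulnb natrM mulrA !ffunE.
Qed.

Lemma HA_slicel d1 d2 n m (phi : mor k (tens (d1 + d2) n) (tens (d1 + d2) m)) x2 y2 :
  HA q phi -> HA q (slicel phi x2 y2).
Proof.
move=> Hphi p p' pp'; apply: funext2 => a b.
rewrite -comp_tensmorl_slice -comp_slice_tensmorl -!Tpair_lshift.
by rewrite (Hphi (lshift d2 p) (lshift d2 p') pp').
Qed.

Lemma HA_slicer d1 d2 n m (phi : mor k (tens (d1 + d2) n) (tens (d1 + d2) m)) x1 y1 :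
  HA q phi -> HA q (slicer phi x1 y1).
Proof.
move=> Hphi p p' pp'; apply: funext2 => a b.
rewrite -comp_tensmorr_slice -comp_slice_tensmorr -!Tpair_rshift Hphi //=.
by rewrite pp' addnS.
Qed.

Lemma HB_slicel d1 d2 n m (phi : mor k (tens (d1 + d2) n) (tens (d1 + d2) m)) x2 y2 :
  HB Q q phi -> HB Q q (slicel phi x2 y2).
Proof.
move=> [Hphi Kphi]; split=> [|p p0]; first exact: HA_slicel.
apply: funext2 => a b.
by rewrite -comp_tensmorl_slice -comp_slice_tensmorl -!Kfac_lshift (Kphi (lshift d2 p) p0).
Qed.

Lemma HA_decomp d1 d2 n m (phi : mor k (tens (d1 + d2) n) (tens (d1 + d2) m)) :
  HA q phi -> exists s, is_decomp (HA q) (HA q) phi s.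
Proof.
move=> Hphi; apply: is_decomp_exists; try exact: HA_subspace.
  by move=> x2 y2; apply: HA_slicel.
by move=> x1 y1; apply: HA_slicer.
Qed.

Lemma HB_decomp d1 d2 n m (phi : mor k (tens (d1 + d2) n) (tens (d1 + d2) m)) :
  HB Q q phi -> exists s, is_decomp (HB Q q) (HA q) phi s.
Proof.
move=> Hphi; apply: is_decomp_exists; [exact: HB_subspace | exact: HA_subspace | |].
  by move=> x2 y2; apply: HB_slicel.
by move=> x1 y1; apply: HA_slicer; case: Hphi.
Qed.

End HeckeHoms.

Local Notation fmap F := (@fmor _ _ F _ _).

Lemma functor_linear (k : fieldType) (Hom : HomPred k) d (F : fdata k d) n m :
  IsFunctor Hom F -> (0 < n)%N -> (0 < m)%N -> mor_linear (Hom d n m) (fmap F).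
Proof. by case=> linF _ _ n0 m0 c f g; apply: linF. Qed.

Lemma castmor_id (k : fieldType) d n m (f : mor k (tens d n) (tens d m)) :
  castmor (erefl d) f = f.
Proof.
have casttup_id p (z : tens d p) : casttup (erefl d) z = z.
  by apply/ffunP => i; rewrite ffunE cast_ord_id.
by apply: funext2 => x y; rewrite /castmor !casttup_id.
Qed.

Section ProductFunctor.
Variables (k : fieldType) (Hom1 Hom2 : HomPred k).
Hypothesis Hom1_subspace : forall d n m, mor_subspace (@Hom1 d n m).
Hypothesis Hom2_subspace : forall d n m, mor_subspace (@Hom2 d n m).
Hypothesis Hom1_idm : forall d n, Hom1 (@idm k (tens d n)).
Hypothesis Hom2_idm : forall d n, Hom2 (@idm k (tens d n)).
Hypothesis Hom1_comp : forall d n m p (f : mor k (tens d n) (tens d m))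
  (g : mor k (tens d m) (tens d p)), Hom1 f -> Hom1 g -> Hom1 (comp f g).
Hypothesis Hom2_comp : forall d n m p (f : mor k (tens d n) (tens d m))
  (g : mor k (tens d m) (tens d p)), Hom2 f -> Hom2 g -> Hom2 (comp f g).

Definition decomposable d1 d2 n m (phi : mor k (tens (d1 + d2) n) (tens (d1 + d2) m)) :=
  exists s, is_decomp Hom1 Hom2 phi s.

Lemma prodF_fmor_in d1 d2 (F : fdata k d1) (G : fdata k d2) n m
    (P1 : mor k (tens d1 n) (tens d1 m) -> Prop) (P2 : mor k (tens d2 n) (tens d2 m) -> Prop)
    (phi : mor k (tens (d1 + d2) n) (tens (d1 + d2) m)) s :
  mor_subspace P1 -> mor_subspace P2 -> (forall f, Hom1 f -> P1 f) -> (forall g, Hom2 g -> P2 g) ->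
  mor_linear P1 (fmap F) -> mor_linear P2 (fmap G) ->
  decomposable phi -> pairs_in P1 P2 s -> phi = (fun x y => \sum_(p <- s) tensmor p.1 p.2 x y) ->
  fmap (prodF Hom1 Hom2 F G) phi = fun x y => \sum_(p <- s) tensm (fmap F p.1) (fmap G p.2) x y.
Proof.
move=> SP1 SP2 sub1 sub2 linF linG phi_dec sP phi_s.
have [s0P phi_s0] := decomp_ofP phi_dec.
have s0P' : pairs_in P1 P2 (decomp_of Hom1 Hom2 phi).
  by move=> p /s0P [H1 H2]; split; [apply: sub1 | apply: sub2].
have := tensor_sum_map SP1 SP2 linF linG s0P' sP
  (etrans (tensor_sum_tensmor phi_s0) (esym (tensor_sum_tensmor phi_s))).
move=> img; apply: funext2 => x y; have := congr1 (fun t => t x.1 y.1 x.2 y.2) img.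
by rewrite /tensor_sum !big_map.
Qed.

Lemma prodF_fmor d1 d2 (F : fdata k d1) (G : fdata k d2) n m
    (phi : mor k (tens (d1 + d2) n) (tens (d1 + d2) m)) s :
  IsFunctor Hom1 F -> IsFunctor Hom2 G -> (0 < n)%N -> (0 < m)%N ->
  is_decomp Hom1 Hom2 phi s ->
  fmap (prodF Hom1 Hom2 F G) phi = fun x y => \sum_(p <- s) tensm (fmap F p.1) (fmap G p.2) x y.
Proof.
move=> FF FG n0 m0 phi_s; have [sP phi_eq] := phi_s.
by apply: prodF_fmor_in (functor_linear FF n0 m0) (functor_linear FG n0 m0) _ sP phi_eq => //;
  exists s.
Qed.

Lemma is_decomp_tensmor d1 d2 n m (f : mor k (tens d1 n) (tens d1 m))
    (g : mor k (tens d2 n) (tens d2 m)) :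
  Hom1 f -> Hom2 g -> is_decomp Hom1 Hom2 (tensmor f g) [:: (f, g)].
Proof.
move=> Hf Hg; split=> [p [<-|//] //|].
by apply: funext2 => x y; rewrite big_seq1.
Qed.

Lemma prodF_fmor_tensmor d1 d2 (F : fdata k d1) (G : fdata k d2) n m
    (f : mor k (tens d1 n) (tens d1 m)) (g : mor k (tens d2 n) (tens d2 m)) :
  IsFunctor Hom1 F -> IsFunctor Hom2 G -> (0 < n)%N -> (0 < m)%N -> Hom1 f -> Hom2 g ->
  fmap (prodF Hom1 Hom2 F G) (tensmor f g) = tensm (fmap F f) (fmap G g).
Proof.
move=> FF FG n0 m0 Hf Hg; rewrite (prodF_fmor FF FG n0 m0 (is_decomp_tensmor Hf Hg)).
by apply: funext2 => x y; rewrite big_seq1.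
Qed.

Definition scale_decomp d1 d2 n m (c : k)
    (p : mor k (tens d1 n) (tens d1 m) * mor k (tens d2 n) (tens d2 m)) :=
  ((fun a b => c * p.1 a b), p.2).

Lemma is_decomp_linear d1 d2 n m c (phi psi : mor k (tens (d1 + d2) n) (tens (d1 + d2) m)) s t :
  is_decomp Hom1 Hom2 phi s -> is_decomp Hom1 Hom2 psi t ->
  is_decomp Hom1 Hom2 (fun x y => c * phi x y + psi x y) (map (@scale_decomp d1 d2 n m c) s ++ t).
Proof.
move=> [sP ->] [tP ->]; split.
  move=> p p_in; have [r_in|/tP //] := In_cat p_in.
  have [r /sP [Hr1 Hr2] ->] := In_map r_in.
  by split=> //=; apply: mor_subspaceZ (Hom1_subspace _ _ _) Hr1.
apply: funext2 => x y; rewrite big_cat big_map mulr_sumr; congr (_ + _).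
by apply: eq_bigr => p _; rewrite /tensmor /= mulrA.
Qed.

Lemma decomposable_subspace d1 d2 n m : mor_subspace (@decomposable d1 d2 n m).
Proof.
split; first by exists [::]; split=> //; apply: funext2 => x y; rewrite big_nil.
by move=> c f g [s fs] [t gt]; eexists; apply: is_decomp_linear fs gt.
Qed.

Lemma prodF_linear d1 d2 (F : fdata k d1) (G : fdata k d2) n m :
  IsFunctor Hom1 F -> IsFunctor Hom2 G -> (0 < n)%N -> (0 < m)%N ->
  mor_linear (@decomposable d1 d2 n m) (fmap (prodF Hom1 Hom2 F G)).
Proof.
move=> FF FG n0 m0 c f g [s fs] [t gt].
rewrite (prodF_fmor FF FG n0 m0 (is_decomp_linear c fs gt)).
rewrite (prodF_fmor FF FG n0 m0 fs) (prodF_fmor FF FG n0 m0 gt).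
apply: funext2 => x y; rewrite big_cat big_map mulr_sumr; congr (_ + _).
apply: eq_big_In => p /fs.1 [Hp1 Hp2].
by rewrite (mor_linearZ _ (Hom1_subspace _ _ _) (functor_linear FF n0 m0)) // /tensm mulrA.
Qed.

Definition comp_decomp d1 d2 n m p
    (s : seq (mor k (tens d1 n) (tens d1 m) * mor k (tens d2 n) (tens d2 m)))
    (t : seq (mor k (tens d1 m) (tens d1 p) * mor k (tens d2 m) (tens d2 p))) :=
  flatten [seq [seq (comp a.1 b.1, comp a.2 b.2) | b <- t] | a <- s].

Lemma is_decomp_comp d1 d2 n m p phi psi s t :
  @is_decomp k Hom1 Hom2 d1 d2 n m phi s -> @is_decomp k Hom1 Hom2 d1 d2 m p psi t ->
  is_decomp Hom1 Hom2 (comp phi psi) (comp_decomp s t).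
Proof.
move=> [sP ->] [tP ->]; split.
  move=> r r_in; have [u u_in r_in'] := In_flatten r_in.
  have [a a_in u_a] := In_map u_in; rewrite {}u_a in r_in'.
  have [b b_in ->] := In_map r_in'; have [Ha1 Ha2] := sP a a_in; have [Hb1 Hb2] := tP b b_in.
  by split; [apply: Hom1_comp | apply: Hom2_comp].
rewrite comp_suml; apply: funext2 => x y; rewrite big_flatten big_map.
apply: eq_bigr => a _; rewrite comp_sumr big_map; apply: eq_bigr => b _.
by rewrite comp_tensmor.
Qed.

Lemma prodF_functor (HomX : HomPred k) d1 d2 (F : fdata k d1) (G : fdata k d2) :
  IsFunctor Hom1 F -> IsFunctor Hom2 G ->
  (forall n m phi, (0 < n)%N -> (0 < m)%N -> @HomX (d1 + d2) n m phi -> decomposable phi) ->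
  IsFunctor HomX (prodF Hom1 Hom2 F G).
Proof.
move=> FF FG HX; have [_ F1 FM] := FF; have [_ G1 GM] := FG; split.
- move=> n m c f g n0 m0 /(HX _ _ _ n0 m0) Df /(HX _ _ _ n0 m0) Dg.
  exact: prodF_linear.
- move=> n n0.
  by rewrite -tensmor1 prodF_fmor_tensmor // F1 // G1 // tensm1.
- move=> n m p f g n0 m0 p0 /(HX _ _ _ n0 m0) [s fs] /(HX _ _ _ m0 p0) [t gt].
  rewrite (prodF_fmor FF FG n0 p0 (is_decomp_comp fs gt)).
  rewrite (prodF_fmor FF FG n0 m0 fs) (prodF_fmor FF FG m0 p0 gt) comp_suml.
  apply: funext2 => x y; rewrite big_flatten big_map.
  apply: eq_big_In => a /fs.1 [Ha1 Ha2]; rewrite comp_sumr big_map.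
  by apply: eq_big_In => b /gt.1 [Hb1 Hb2]; rewrite comp_tensm FM // GM.
Qed.

Lemma nprod_natural (HomX : HomPred k) d1 d2 (F F' : fdata k d1) (G G' : fdata k d2)
    (f : ntrans F F') (g : ntrans G G') :
  IsFunctor Hom1 F -> IsFunctor Hom1 F' -> IsFunctor Hom2 G -> IsFunctor Hom2 G' ->
  (forall n m phi, (0 < n)%N -> (0 < m)%N -> @HomX (d1 + d2) n m phi -> decomposable phi) ->
  IsNat Hom1 f -> IsNat Hom2 g -> IsNat HomX (@nprod _ Hom1 Hom2 _ _ _ _ _ _ _ _ f g).
Proof.
move=> FF FF' FG FG' HX Nf Ng n m phi n0 m0 /(HX _ _ _ n0 m0) [s phi_s].
rewrite castmor_id (prodF_fmor FF FG n0 m0 phi_s) (prodF_fmor FF' FG' n0 m0 phi_s).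
rewrite comp_suml comp_sumr; apply: funext2 => x y; apply: eq_big_In => p /phi_s.1 [Hp1 Hp2].
have := Nf n m p.1 n0 m0 Hp1; have := Ng n m p.2 n0 m0 Hp2; rewrite !castmor_id.
by rewrite /nprod !comp_tensm => -> ->.
Qed.

End ProductFunctor.

Lemma sum_unique (k : fieldType) (T : finType) (x : T) (F : T -> k) :
  (forall y, y = x) -> \sum_y F y = F x.
Proof. by move=> all_x; apply: big_pred1 => y; rewrite /= [y]all_x eqxx. Qed.

Definition tens0 n : tens 0 n := ffun0 (card_ord 0).

Lemma tens0_eq n (x : tens 0 n) : x = tens0 n.
Proof. by apply/ffunP => -[]. Qed.

Lemma HB_castmor (k : fieldType) (Q q : k) d d' (h : d = d') n m
    (f : mor k (tens d' n) (tens d' m)) :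
  HB Q q f -> HB Q q (castmor h f).
Proof. by case: d' / h f => f; rewrite castmor_id. Qed.

Section CastAssoc.
Variables (e d1 d2 n : nat) (x : tens (e + (d1 + d2)) n).

Lemma splitLL_castA : splitL (splitL (casttup (addnA e d1 d2) x)) = splitL x.
Proof. by apply/ffunP => i; rewrite !ffunE; congr (x _); apply: val_inj. Qed.

Lemma splitRL_castA : splitR (splitL (casttup (addnA e d1 d2) x)) = splitL (splitR x).
Proof. by apply/ffunP => i; rewrite !ffunE; congr (x _); apply: val_inj. Qed.

Lemma splitR_castA : splitR (casttup (addnA e d1 d2) x) = splitR (splitR x).
Proof. by apply/ffunP => i; rewrite !ffunE; congr (x _); apply: val_inj => /=; rewrite addnA. Qed.

End CastAssoc.

Lemma castmor_addn0 (k : fieldType) e n m (f : mor k (tens e n) (tens e m)) :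
  castmor (addn0 e) f = tensmor f (fun (_ : tens 0 n) (_ : tens 0 m) => 1).
Proof.
have cast0 p (x : tens (e + 0) p) : casttup (addn0 e) x = splitL x.
  by apply/ffunP => i; rewrite !ffunE; congr (x _); apply: val_inj.
by apply: funext2 => x y; rewrite /castmor /tensmor !cast0 mulr1.
Qed.

Lemma tensmor_castmor_addn0 (k : fieldType) e n m (f : mor k (tens (e + 0) n) (tens (e + 0) m)) :
  tensmor (castmor (esym (addn0 e)) f) (fun (_ : tens 0 n) (_ : tens 0 m) => 1) = f.
Proof.
have cast0 p (x : tens (e + 0) p) : casttup (esym (addn0 e)) (splitL x) = x.
  by apply/ffunP => i; rewrite !ffunE; congr (x _); apply: val_inj.
by apply: funext2 => x y; rewrite /castmor /tensmor !cast0 mulr1.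
Qed.

Section Structure.
Variables (k : fieldType) (Q q : k).
Let SA := @HA_subspace k q.
Let SB := @HB_subspace k Q q.

Lemma unitAP_fmor n m (f : mor k (tens 0 n) (tens 0 m)) u v :
  fmap (unitAP k) f u v = f (tens0 n) (tens0 m).
Proof. by rewrite /= (sum_unique _ (@tens0_eq n)) (sum_unique _ (@tens0_eq m)). Qed.

Lemma unit_functor : IsFunctor (HA q) (unitAP k).
Proof.
split=> [n m c f g _ _ _ _|n _|n m p f g _ _ _ _ _]; apply: funext2 => u v.
- by rewrite !unitAP_fmor.
- by rewrite unitAP_fmor /idm eqxx; case: u; case: v.
- have unit_tt (z : unit) : z = tt by case: z.
  by rewrite unitAP_fmor /comp (sum_unique _ (@tens0_eq m)) (sum_unique _ unit_tt) !unitAP_fmor.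
Qed.

Lemma tensAP_functor d e (F : fdata k d) (G : fdata k e) :
  IsFunctor (HA q) F -> IsFunctor (HA q) G -> IsFunctor (HA q) (tensAP q F G).
Proof.
move=> FF FG; apply: (prodF_functor SA SA (@HA_idm k q) (@HA_idm k q)
  (@HA_comp k q) (@HA_comp k q) FF FG).
by move=> n m phi _ _; apply: HA_decomp.
Qed.

Lemma actP_functor e d (G : fdata k e) (F : fdata k d) :
  IsFunctor (HB Q q) G -> IsFunctor (HA q) F -> IsFunctor (HB Q q) (actP Q q G F).
Proof.
move=> FG FF; apply: (prodF_functor SB SA (@HB_idm k Q q) (@HA_idm k q)
  (@HB_comp k Q q) (@HA_comp k q) FG FF).
by move=> n m phi _ _; apply: HB_decomp.
Qed.

Lemma nact_natural e d (G G' : fdata k e) (F F' : fdata k d) (f : ntrans G G') (g : ntrans F F') :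
  IsFunctor (HB Q q) G -> IsFunctor (HB Q q) G' -> IsFunctor (HA q) F -> IsFunctor (HA q) F' ->
  IsNat (HB Q q) f -> IsNat (HA q) g -> IsNat (HB Q q) (nact Q q f g).
Proof.
move=> FG FG' FF FF'; apply: (nprod_natural SB SA FG FG' FF FF').
by move=> n m phi _ _; apply: HB_decomp.
Qed.

Lemma nact_nid e d (G : fdata k e) (F : fdata k d) n :
  nact Q q (nid G) (nid F) n = nid (actP Q q G F) n.
Proof. exact: tensm1. Qed.

Lemma nact_ncomp e d (Y1 Y2 Y3 : fdata k e) (X1 X2 X3 : fdata k d) (f1 : ntrans Y2 Y3)
    (f2 : ntrans Y1 Y2) (g1 : ntrans X2 X3) (g2 : ntrans X1 X2) n :
  nact Q q (ncomp f1 f2) (ncomp g1 g2) n = ncomp (nact Q q f1 g1) (nact Q q f2 g2) n.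
Proof. by rewrite /nact /nprod /ncomp comp_tensm. Qed.

Lemma comp_lam_l e d1 d2 (Y : fdata k e) (X1 : fdata k d1) (X2 : fdata k d2) n (A : finType)
    (h : mor k (fob (actP Q q (actP Q q Y X1) X2) n) A) :
  comp (lam Q q Y X1 X2 n) h = fun x y => h ((x.1, x.2.1), x.2.2) y.
Proof. exact: comp_graphl. Qed.

Lemma comp_lam_r e d1 d2 (Y : fdata k e) (X1 : fdata k d1) (X2 : fdata k d2) m (A : finType)
    (h : mor k A (fob (actP Q q Y (tensAP q X1 X2)) m)) :
  comp h (lam Q q Y X1 X2 m) = fun x y => h x (y.1.1, (y.1.2, y.2)).
Proof.
apply: (comp_graphr (u := fun x : fob Y m * (fob X1 m * fob X2 m) => ((x.1, x.2.1), x.2.2))).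
  by case=> a [b c].
by case=> [[a b] c].
Qed.

Definition refine_decomp e d1 d2 n m
    (s : seq (mor k (tens (e + d1) n) (tens (e + d1) m) * mor k (tens d2 n) (tens d2 m))) :=
  flatten [seq [seq (r.1, tensmor r.2 p.2) | r <- decomp_of (HB Q q) (HA q) p.1] | p <- s].

Lemma refine_decomp_in e d1 d2 n m s :
  pairs_in (@HB k Q q (e + d1) n m) (@HA k q d2 n m) s ->
  pairs_in (@HB k Q q e n m) (decomposable (HA q) (HA q) (n := n) (m := m))
    (refine_decomp (d1 := d1) s).
Proof.
move=> sP r r_in; have [v v_in r_v] := In_flatten r_in.
have [p p_in v_p] := In_map v_in; rewrite {}v_p in r_v.
have [r' r'_in ->] := In_map r_v; have [Hp1 Hp2] := sP p p_in.
have [Hr1 Hr2] := (decomp_ofP (HB_decomp Hp1)).1 r' r'_in.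
by split=> //; exists [:: (r'.2, p.2)]; apply: is_decomp_tensmor.
Qed.

Lemma castmor_refine_decomp e d1 d2 n m
    (f : mor k (tens (e + d1 + d2) n) (tens (e + d1 + d2) m)) s :
  is_decomp (HB Q q) (HA q) f s ->
  castmor (addnA e d1 d2) f = fun x y => \sum_(r <- refine_decomp s) tensmor r.1 r.2 x y.
Proof.
move=> [sP f_s]; apply: funext2 => x y; rewrite /castmor {1}f_s big_flatten big_map.
apply: eq_big_In => p /sP [Hp1 _]; have [_ p_r] := decomp_ofP (HB_decomp Hp1).
rewrite big_map {1}/tensmor {1}p_r mulr_suml; apply: eq_bigr => r _.
by rewrite /tensmor !splitLL_castA !splitRL_castA !splitR_castA mulrA.
Qed.

Lemma lam_natural e d1 d2 (Y : fdata k e) (X1 : fdata k d1) (X2 : fdata k d2) :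
  IsFunctor (HB Q q) Y -> IsFunctor (HA q) X1 -> IsFunctor (HA q) X2 ->
  IsNatC (HB Q q) (addnA e d1 d2) (actP Q q Y (tensAP q X1 X2))
    (actP Q q (actP Q q Y X1) X2) (lam Q q Y X1 X2).
Proof.
move=> FY FX1 FX2 n m f n0 m0 Hf.
have f_s := decomp_ofP (HB_decomp Hf); set s := decomp_of _ _ f in f_s.
have FX12 := prodF_linear SA SA FX1 FX2 n0 m0.
rewrite (prodF_fmor_in (SB _ _ _) (decomposable_subspace (HA q) SA d1 d2 n m) _ _
  (functor_linear FY n0 m0) FX12 (HB_decomp (HB_castmor _ Hf)) (refine_decomp_in f_s.1)
  (castmor_refine_decomp f_s)) => //; last by move=> g; apply: HA_decomp.
rewrite comp_lam_r comp_lam_l (prodF_fmor SB SA (actP_functor FY FX1) FX2 n0 m0 f_s).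
apply: funext2 => x y; rewrite big_flatten big_map; apply: eq_big_In => p /f_s.1 [Hp1 Hp2].
have p_dec := decomp_ofP (HB_decomp Hp1).
rewrite big_map (@eq_big_In _ _ _ _ _ _ (fun r =>
  fmap Y r.1 x.1 y.1.1 * (fmap X1 r.2 x.2.1 y.1.2 * fmap X2 p.2 x.2.2 y.2))); last first.
  move=> r /p_dec.1 [_ Hr2].
  by rewrite [(_, _).2]/= [(_, _).1]/= (prodF_fmor_tensmor SA SA FX1 FX2 n0 m0 Hr2 Hp2).
rewrite (prodF_fmor SB SA FY FX1 n0 m0 p_dec) /tensm /= mulr_suml.
by apply: eq_bigr => r _; rewrite mulrA.
Qed.

Lemma lam_nact e d1 d2 (Y Y' : fdata k e) (X1 X1' : fdata k d1) (X2 X2' : fdata k d2)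
    (f : ntrans Y Y') (g1 : ntrans X1 X1') (g2 : ntrans X2 X2') n :
  ncomp (lam Q q Y' X1' X2') (nact Q q f (ntens q g1 g2)) n =
  ncomp (nact Q q (nact Q q f g1) g2) (lam Q q Y X1 X2) n.
Proof.
rewrite /ncomp comp_lam_r comp_lam_l; apply: funext2 => x y.
by rewrite /nact /nprod /ntens /tensm /= mulrA.
Qed.

Lemma lam_coherence e d1 d2 d3 (Y : fdata k e) (X1 : fdata k d1) (X2 : fdata k d2)
    (X3 : fdata k d3) n :
  ncomp (nact Q q (lam Q q Y X1 X2) (nid X3)) (lam Q q Y (tensAP q X1 X2) X3) n =
  ncomp (lam Q q (actP Q q Y X1) X2 X3)
    (ncomp (lam Q q Y X1 (tensAP q X2 X3)) (nact Q q (nid Y) (assocAP q X1 X2 X3))) n.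
Proof.
rewrite /ncomp !comp_lam_r comp_lam_l; apply: funext2 => -[x1 [[x2 x3] x4]] [[[y1 y2] y3] y4].
rewrite /nact /nprod /nid /tensm /idm /lam /assocAP /=.
by rewrite -!natrM !mulnb !xpair_eqE (eq_sym x4) (eq_sym x1) !andbA.
Qed.

Lemma comp_rho_l e (Y : fdata k e) n (A : finType) (h : mor k (fob Y n) A) :
  comp (rho Q q Y n) h = fun x y => h x.1 y.
Proof. exact: comp_graphl. Qed.

Lemma comp_rho_r e (Y : fdata k e) m (A : finType)
    (h : mor k A (fob (actP Q q Y (unitAP k)) m)) :
  comp h (rho Q q Y m) = fun x y => h x (y, tt).
Proof. by apply: (comp_graphr (u := fun x : fob Y m * unit => x.1)); [case=> a [] |]. Qed.

Definition rho_inv e (Y : fdata k e) : ntrans Y (actP Q q Y (unitAP k)) :=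
  fun n y x => (x == (y, tt))%:R.
Arguments rho_inv {e} Y n _ _.

Lemma comp_rho_inv_l e (Y : fdata k e) n (A : finType)
    (h : mor k (fob (actP Q q Y (unitAP k)) n) A) :
  comp (rho_inv Y n) h = fun x y => h (x, tt) y.
Proof. exact: comp_graphl. Qed.

Lemma comp_rho_inv_r e (Y : fdata k e) m (A : finType) (h : mor k A (fob Y m)) :
  comp h (rho_inv Y m) = fun x y => h x y.1.
Proof. by apply: (comp_graphr (u := fun x : fob Y m => (x, tt))); [| case=> a []]. Qed.

Lemma actP_unit_fmor e (Y : fdata k e) n m (f : mor k (tens e n) (tens e m)) :
  IsFunctor (HB Q q) Y -> (0 < n)%N -> (0 < m)%N -> HB Q q f ->
  fmap (actP Q q Y (unitAP k)) (tensmor f (fun _ _ => 1)) = fun x y => fmap Y f x.1 y.1.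
Proof.
move=> FY n0 m0 Hf.
rewrite (prodF_fmor_tensmor SB SA FY unit_functor n0 m0 Hf (HA_deg0 q _)).
by apply: funext2 => x y; rewrite /tensm unitAP_fmor mulr1.
Qed.

Lemma rho_natural e (Y : fdata k e) :
  IsFunctor (HB Q q) Y -> IsNatC (HB Q q) (addn0 e) (actP Q q Y (unitAP k)) Y (rho Q q Y).
Proof.
move=> FY n m f n0 m0 Hf.
by rewrite castmor_addn0 actP_unit_fmor // comp_rho_r comp_rho_l.
Qed.

Lemma rho_inv_natural e (Y : fdata k e) :
  IsFunctor (HB Q q) Y -> IsNatC (HB Q q) (esym (addn0 e)) Y (actP Q q Y (unitAP k)) (rho_inv Y).
Proof.
move=> FY n m f n0 m0 Hf; rewrite -[in RHS](tensmor_castmor_addn0 f).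
rewrite actP_unit_fmor //; last exact: HB_castmor.
by rewrite comp_rho_inv_l (comp_rho_inv_r (fmap Y _)).
Qed.

Lemma rho_invK e (Y : fdata k e) n :
  ncomp (rho_inv Y) (rho Q q Y) n = nid (actP Q q Y (unitAP k)) n.
Proof. by rewrite /ncomp comp_rho_l; apply: funext2 => -[a []] y; rewrite /nid /idm eq_sym. Qed.

Lemma rhoK e (Y : fdata k e) n : ncomp (rho Q q Y) (rho_inv Y) n = nid Y n.
Proof. by rewrite /ncomp comp_rho_inv_l; apply: funext2 => x y; rewrite /rho /nid /idm eq_sym. Qed.

Lemma rho_nact e (Y Y' : fdata k e) (f : ntrans Y Y') n :
  ncomp (rho Q q Y') (nact Q q f (nid (unitAP k))) n = ncomp f (rho Q q Y) n.
Proof.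
rewrite /ncomp comp_rho_r comp_rho_l; apply: funext2 => -[a []] y.
by rewrite /nact /nprod /nid /tensm /idm /= mulr1.
Qed.

Lemma rho_triangle e d (Y : fdata k e) (X : fdata k d) n :
  ncomp (nact Q q (rho Q q Y) (nid X)) (lam Q q Y (unitAP k) X) n =
  nact Q q (nid Y) (lunitAP q X) n.
Proof.
rewrite /ncomp comp_lam_l; apply: funext2 => x y.
by rewrite /nact /nprod /nid /tensm /idm /rho /lunitAP /= !(eq_sym y.1) !(eq_sym y.2).
Qed.

End Structure.

Arguments rho_inv {k} Q q {e} Y n _ _.

Theorem theorem4p2 (k : fieldType) (Q q : k) (hQ : Q != 0) (hq : q != 0) :
  (* presupposed monoidal structure of AP_q: unit and (x) land in AP_q *)
  IsFunctor (HA q) (unitAP k) /\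
  (forall (d e : nat) (F : fdata k d) (G : fdata k e),
     IsFunctor (HA q) F -> IsFunctor (HA q) G -> IsFunctor (HA q) (tensAP q F G)) /\
  (* * is a functor P_{Q,q} x AP_q -> P_{Q,q} : on objects *)
  (forall (e d : nat) (G : fdata k e) (F : fdata k d),
     IsFunctor (HB Q q) G -> IsFunctor (HA q) F -> IsFunctor (HB Q q) (actP Q q G F)) /\
  (* on morphisms *)
  (forall (e d : nat) (G G' : fdata k e) (F F' : fdata k d)
     (f : ntrans G G') (g : ntrans F F'),
     IsFunctor (HB Q q) G -> IsFunctor (HB Q q) G' ->
     IsFunctor (HA q) F -> IsFunctor (HA q) F' ->
     IsNat (HB Q q) f -> IsNat (HA q) g ->
     IsNat (HB Q q) (nact Q q f g)) /\
  (* identities *)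
  (forall (e d : nat) (G : fdata k e) (F : fdata k d),
     IsFunctor (HB Q q) G -> IsFunctor (HA q) F ->
     forall n : nat, (0 < n)%N -> nact Q q (nid G) (nid F) n = nid (actP Q q G F) n) /\
  (* axiom (1) *)
  (forall (e d : nat) (Y1 Y2 Y3 : fdata k e) (X1 X2 X3 : fdata k d)
     (f1 : ntrans Y2 Y3) (f2 : ntrans Y1 Y2) (g1 : ntrans X2 X3) (g2 : ntrans X1 X2),
     IsFunctor (HB Q q) Y1 -> IsFunctor (HB Q q) Y2 -> IsFunctor (HB Q q) Y3 ->
     IsFunctor (HA q) X1 -> IsFunctor (HA q) X2 -> IsFunctor (HA q) X3 ->
     IsNat (HB Q q) f1 -> IsNat (HB Q q) f2 -> IsNat (HA q) g1 -> IsNat (HA q) g2 ->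
     forall n : nat, (0 < n)%N ->
       nact Q q (ncomp f1 f2) (ncomp g1 g2) n =
       ncomp (nact Q q f1 g1) (nact Q q f2 g2) n) /\
  (* axiom (2): lambda is a natural morphism ... *)
  (forall (e d1 d2 : nat) (Y : fdata k e) (X1 : fdata k d1) (X2 : fdata k d2),
     IsFunctor (HB Q q) Y -> IsFunctor (HA q) X1 -> IsFunctor (HA q) X2 ->
     IsNatC (HB Q q) (addnA e d1 d2) (actP Q q Y (tensAP q X1 X2))
       (actP Q q (actP Q q Y X1) X2) (lam Q q Y X1 X2)) /\
  (forall (e d1 d2 : nat) (Y Y' : fdata k e) (X1 X1' : fdata k d1)
     (X2 X2' : fdata k d2) (f : ntrans Y Y') (g1 : ntrans X1 X1') (g2 : ntrans X2 X2'),
     IsFunctor (HB Q q) Y -> IsFunctor (HB Q q) Y' ->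
     IsFunctor (HA q) X1 -> IsFunctor (HA q) X1' ->
     IsFunctor (HA q) X2 -> IsFunctor (HA q) X2' ->
     IsNat (HB Q q) f -> IsNat (HA q) g1 -> IsNat (HA q) g2 ->
     forall n : nat, (0 < n)%N ->
       ncomp (lam Q q Y' X1' X2') (nact Q q f (ntens q g1 g2)) n =
       ncomp (nact Q q (nact Q q f g1) g2) (lam Q q Y X1 X2) n) /\
  (* ... satisfying the coherence condition of (2) *)
  (forall (e d1 d2 d3 : nat) (Y : fdata k e) (X1 : fdata k d1) (X2 : fdata k d2)
     (X3 : fdata k d3),
     IsFunctor (HB Q q) Y -> IsFunctor (HA q) X1 -> IsFunctor (HA q) X2 ->
     IsFunctor (HA q) X3 ->
     forall n : nat, (0 < n)%N ->
       ncomp (nact Q q (lam Q q Y X1 X2) (nid X3)) (lam Q q Y (tensAP q X1 X2) X3) n =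
       ncomp (lam Q q (actP Q q Y X1) X2 X3)
         (ncomp (lam Q q Y X1 (tensAP q X2 X3))
                (nact Q q (nid Y) (assocAP q X1 X2 X3))) n) /\
  (* axiom (3): rho is a natural isomorphism ... *)
  (forall (e : nat) (Y : fdata k e),
     IsFunctor (HB Q q) Y ->
     IsNatC (HB Q q) (addn0 e) (actP Q q Y (unitAP k)) Y (rho Q q Y) /\
     exists rinv : ntrans Y (actP Q q Y (unitAP k)),
       IsNatC (HB Q q) (esym (addn0 e)) Y (actP Q q Y (unitAP k)) rinv /\
       (forall n : nat, (0 < n)%N ->
          ncomp rinv (rho Q q Y) n = nid (actP Q q Y (unitAP k)) n /\
          ncomp (rho Q q Y) rinv n = nid Y n)) /\
  (forall (e : nat) (Y Y' : fdata k e) (f : ntrans Y Y'),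
     IsFunctor (HB Q q) Y -> IsFunctor (HB Q q) Y' -> IsNat (HB Q q) f ->
     forall n : nat, (0 < n)%N ->
       ncomp (rho Q q Y') (nact Q q f (nid (unitAP k))) n =
       ncomp f (rho Q q Y) n) /\
  (* ... satisfying the triangle condition of (3) *)
  (forall (e d : nat) (Y : fdata k e) (X : fdata k d),
     IsFunctor (HB Q q) Y -> IsFunctor (HA q) X ->
     forall n : nat, (0 < n)%N ->
       ncomp (nact Q q (rho Q q Y) (nid X)) (lam Q q Y (unitAP k) X) n =
       nact Q q (nid Y) (lunitAP q X) n).
Proof.
split; first exact: unit_functor.
split; first exact: tensAP_functor.
split; first exact: actP_functor.
split; first by move=> *; apply: nact_natural.
split; first by move=> *; apply: nact_nid.
split; first by move=> *; apply: nact_ncomp.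
split; first exact: lam_natural.
split; first by move=> *; apply: lam_nact.
split; first by move=> *; apply: lam_coherence.
split.
  move=> e Y FY; split; first exact: rho_natural.
  exists (rho_inv Q q Y); split; first exact: rho_inv_natural.
  by move=> n _; rewrite rho_invK rhoK.
split; first by move=> *; apply: rho_nact.
by move=> *; apply: rho_triangle.
Qed.
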